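(* Let $L$ be an indexed language with threshold $l$, let $w\in L$ with a set of at least $l$ marked positions, and let $u_i$, $v_{i,j}$, $I$, $\phi$ be any factorization and map satisfying properties (1)–(4) of the threshold definition. Then for every $t\ge0$, the word $w^{(t)}$ has at least $t$ marked positions.
   Context: Indexed languages are the languages generated by indexed grammars (grammars whose nonterminals carry stacks of symbols that can be pushed, popped and copied to all nonterminals produced by a rule). An integer $l\ge0$ is a threshold for a language $L$ if for every $w\in L$ with a set of at least $l$ marked positions there are: (1) a factorization $w=u_1\cdots u_n$, $u_i=v_{i,1}\cdots v_{i,n_i}$, with $I=\{(i,j):1\le i\le n,1\le j\le n_i\}$; (2) a map $\phi:I\to\{1,\dots,n\}$ with $w^{(t)}\in L$ for all $t\ge0$, where $v^{(0)}_{i,j}=v_{i,j}$, $u_i^{(t)}=v_{i,1}^{(t)}\cdots v_{i,n_i}^{(t)}$, $v_{i,j}^{(t+1)}=u^{(t)}_{\phi(i,j)}$, $w^{(t)}=u_1^{(t)}\cdots u_n^{(t)}$; (3) if $v_{i,j}$ contains a marked position then so does $u_{\phi(i,j)}$; (4) some $(\mathbf i,\mathbf j)\in I$ has $\phi(\mathbf i,\mathbf j)=\mathbf i$ and $u_{\mathbf i}$ has a marked position outside $v_{\mathbf i,\mathbf j}$. (Every indexed language has a threshold.) Marked positions of $w^{(t)}$: introduce a symbol $x_{i,j}$ for each $(i,j)\in I$, the morphism $h(x_{i,j})=x_{\phi(i,j),1}\cdots x_{\phi(i,j),n_{\phi(i,j)}}$ and $X=x_{1,1}\cdots x_{1,n_1}\cdots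 x_{n,1}\cdots x_{n,n_n}$; then $w^{(t)}$ is obtained from $h^t(X)$ by replacing each occurrence of $x_{i,j}$ by a copy of $v_{i,j}$, and a position of $w^{(t)}$ is marked iff it lies in such a copy of some $v_{i,j}$ at a position corresponding to a marked position of $w$ inside $v_{i,j}$. *)

From Stdlib Require Import Relations List.
From mathcomp Require Import all_boot.

Set Implicit Arguments.
Unset Strict Implicit.
Unset Printing Implicit Defensive.

(* Indexed grammars (Aho 1968), normal form with three kinds of rules:  *)
(*   A -> alpha      (stack of A copied to every nonterminal of alpha)  *)
(*   A -> B f        (push flag f)                                      *)
(*   A f -> alpha    (pop f, rest of stack copied to nonterminals)      *)

Inductive isym (N T : Type) := ITerm of T | INont of N.

Inductive irule (N F T : Type) :=
| RCopy of N & seq (isym N T)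
| RPush of N & N & F
| RPop  of N & F & seq (isym N T).

Record indexed_grammar (N F T : Type) := IndexedGrammar {
  ig_start : N;
  ig_rules : seq (irule N F T)
}.

Inductive item (N F T : Type) := ItTerm of T | ItNont of N & seq F.

Definition inst (N F T : Type) (st : seq F) (rhs : seq (isym N T))
  : seq (item N F T) :=
  map (fun s => match s with
                | ITerm a => ItTerm N F a
                | INont B => ItNont T B st
                end) rhs.

Inductive istep (N F T : Type) (G : indexed_grammar N F T)
  : seq (item N F T) -> seq (item N F T) -> Prop :=
| step_copy x y A st rhs :
    List.In (RCopy F A rhs) (ig_rules G) ->
    istep G (x ++ ItNont T A st :: y) (x ++ inst st rhs ++ y)
| step_push x y A B f st :
    List.In (RPush T A B f) (ig_rules G) ->
    istep G (x ++ ItNont T A st :: y) (x ++ ItNont T B (f :: st) :: y)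
| step_pop x y A f st rhs :
    List.In (RPop A f rhs) (ig_rules G) ->
    istep G (x ++ ItNont T A (f :: st) :: y) (x ++ inst st rhs ++ y).

Definition iderives (N F T : Type) (G : indexed_grammar N F T) :=
  clos_refl_trans _ (istep G).

Definition ig_language (N F T : Type) (G : indexed_grammar N F T)
  (w : seq T) : Prop :=
  iderives G [:: ItNont T (ig_start G) [::]] (map (@ItTerm N F T) w).

Definition indexed_language (T : finType) (L : seq T -> Prop) : Prop :=
  exists (N F : finType) (G : indexed_grammar N F T),
    forall w, L w <-> ig_language G w.

(* Marked words: a word together with its set of marked positions is   *)
(* encoded as a sequence of pairs (letter, is_marked).                 *)
(* Factorization: vs = [:: [:: v_{1,1}; ..; v_{1,n_1}]; ..]            *)
(* (0-based indices), u_i = flatten (vs_i), phi : nat -> nat -> nat.   *)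

Section Iter.
Variable T : Type.
Notation mword := (seq (T * bool)).
Variables (vs : seq (seq mword)) (phi : nat -> nat -> nat).

Definition nfac := size vs.
Definition nsub i := size (nth [::] vs i).
Definition vfac i j : mword := nth [::] (nth [::] vs i) j.
Definition ufac i : mword := flatten (nth [::] vs i).
Definition inI i j := (i < nfac) && (j < nsub i).

Fixpoint uiter (t : nat) : seq mword :=
  match t with
  | 0 => map (@flatten _) vs
  | t'.+1 => [seq flatten [seq nth [::] (uiter t') (phi i j)
                          | j <- iota 0 (nsub i)]
             | i <- iota 0 nfac]
  end.

Definition witer (t : nat) : mword := flatten (uiter t).

(* the morphism h on the symbols x_{i,j} = (i,j) *)
Definition hsym (p : nat * nat) : seq (nat * nat) :=
  [seq (phi p.1 p.2, k) | k <- iota 0 (nsub (phi p.1 p.2))].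
Definition hmorph (s : seq (nat * nat)) : seq (nat * nat) :=
  flatten (map hsym s).
Definition Xword : seq (nat * nat) :=
  flatten [seq [seq (i, k) | k <- iota 0 (nsub i)] | i <- iota 0 nfac].

(* w^{(t)} with its marked positions: h^t(X) with each x_{i,j} replaced
   by a copy of v_{i,j} (carrying its marks). *)
Definition wmarked (t : nat) : mword :=
  flatten [seq vfac p.1 p.2 | p <- iter t hmorph Xword].

Definition nmarked (x : mword) : nat := count snd x.
Definition has_mark (x : mword) : bool := has snd x.

Definition threshold_factorization (L : seq T -> Prop) (w : mword) : Prop :=
  [/\ (* (1) *) w = flatten (map (@flatten _) vs),
      (* (2) *) (forall i j, inI i j -> phi i j < nfac) /\
                (forall t, L (map fst (witer t))),
      (* (3) *) (forall i j, inI i j -> has_mark (vfac i j) ->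
                   has_mark (ufac (phi i j)))
    & (* (4) *) exists i j, [/\ inI i j, phi i j = i &
                   has_mark (flatten (take j (nth [::] vs i))) ||
                   has_mark (flatten (drop j.+1 (nth [::] vs i)))]].
End Iter.

Definition is_threshold (T : Type) (L : seq T -> Prop) (l : nat) : Prop :=
  forall w : seq (T * bool), l <= nmarked w ->
    exists vs phi, threshold_factorization vs phi L w.

From mathcomp Require Import all_boot.

Set Implicit Arguments.
Unset Strict Implicit.
Unset Printing Implicit Defensive.

(* Count the marks of w^(t) row by row: if m_t(i) is the number of marked
   positions contributed by h^t(x_{i,1} ... x_{i,n_i}), then
   m_{t+1}(i) = sum_j m_t(phi(i,j)).  By (3) a row whose u_i carries a mark
   keeps contributing a mark forever; at the loop phi(i,j) = i of (4) the
   recursion gives m_{t+1}(i) >= m_t(i) + m_t(phi(i,k)) >= m_t(i) + 1 for an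
   index k <> j with v_{i,k} marked.  Hence m_t(i) >= t. *)

Lemma sumn_map_rem (A : eqType) (f : A -> nat) (s : seq A) x :
  x \in s -> sumn (map f s) = f x + sumn (map f (rem x s)).
Proof. by move=> xs; rewrite (perm_sumn (perm_map f (perm_to_rem xs))). Qed.

Lemma leq_sumn_map (A : eqType) (f : A -> nat) (s : seq A) x :
  x \in s -> f x <= sumn (map f s).
Proof. by move=> xs; rewrite (sumn_map_rem f xs) leq_addr. Qed.

Lemma leq_sumn_map2 (A : eqType) (f : A -> nat) (s : seq A) x y :
  uniq s -> x \in s -> y \in s -> y != x -> f x + f y <= sumn (map f s).
Proof.
move=> uniq_s xs ys yx; rewrite (sumn_map_rem f xs) leq_add2l.
by apply: leq_sumn_map; rewrite mem_rem_uniq // inE yx ys.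
Qed.

Lemma has_flatten (A : Type) (a : pred A) (ss : seq (seq A)) :
  has a (flatten ss) = has (has a) ss.
Proof. by elim: ss => //= s ss IH; rewrite has_cat IH. Qed.

Section RowMarks.

Variables (T : Type) (vs : seq (seq (seq (T * bool)))) (phi : nat -> nat -> nat).

Local Notation h := (hmorph vs phi).

Lemma iter_hmorph_cat t s1 s2 : iter t h (s1 ++ s2) = iter t h s1 ++ iter t h s2.
Proof.
by elim: t => //= t ->; rewrite /hmorph map_cat flatten_cat.
Qed.

Lemma iter_hmorph_flatten t ss :
  iter t h (flatten ss) = flatten (map (iter t h) ss).
Proof.
elim: ss => [|s ss IH] /=; first by elim: t => //= t ->.
by rewrite iter_hmorph_cat IH.
Qed.

Definition row i := [seq (i, k) | k <- iota 0 (nsub vs i)].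

Lemma Xword_rows : Xword vs = flatten (map row (iota 0 (nfac vs))).
Proof. by []. Qed.

Lemma hmorph_row i :
  h (row i) = flatten [seq row (phi i k) | k <- iota 0 (nsub vs i)].
Proof. by rewrite /hmorph /row -map_comp. Qed.

Definition marks (s : seq (nat * nat)) :=
  sumn [seq nmarked (vfac vs p.1 p.2) | p <- s].

Lemma nmarked_wmarked t : nmarked (wmarked vs phi t) = marks (iter t h (Xword vs)).
Proof. by rewrite /nmarked count_flatten -map_comp. Qed.

Lemma marks_flatten ss : marks (flatten ss) = sumn (map marks ss).
Proof. by rewrite /marks map_flatten sumn_flatten -map_comp. Qed.

Definition row_marks t i := marks (iter t h (row i)).

Lemma row_marksS t i :
  row_marks t.+1 i = sumn [seq row_marks t (phi i k) | k <- iota 0 (nsub vs i)].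
Proof. by rewrite /row_marks iterSr hmorph_row iter_hmorph_flatten marks_flatten -!map_comp. Qed.

Lemma row_marks0 i : row_marks 0 i = nmarked (ufac vs i).
Proof.
rewrite /row_marks /marks /row /ufac /nmarked count_flatten -map_comp.
by rewrite -[in RHS](take_size (nth [::] vs i)) -(map_nth_iota0 [::] (leqnn _)) -map_comp.
Qed.

Lemma inI_nsub i k : k < nsub vs i -> inI vs i k.
Proof.
rewrite /inI => lt_k; rewrite lt_k andbT; move: lt_k; rewrite /nsub /nfac.
by case: (ltnP i (size vs)) => // le_vs_i; rewrite nth_default.
Qed.

Lemma has_mark_ufacP i :
  has_mark (ufac vs i) -> exists2 k, k < nsub vs i & has_mark (vfac vs i k).
Proof. by rewrite /has_mark /ufac has_flatten => /(has_nthP [::]). Qed.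

Lemma has_mark_outsideP (s : seq (seq (T * bool))) j :
  has_mark (flatten (take j s)) || has_mark (flatten (drop j.+1 s)) ->
  exists2 k, (k != j) && (k < size s) & has_mark (nth [::] s k).
Proof.
rewrite /has_mark !has_flatten => /orP[/(has_nthP [::])[k] | /(has_nthP [::])[k]].
  rewrite size_take_min leq_min => /andP[kj ks]; rewrite nth_take //.
  by exists k => //; rewrite ltn_eqF ?ks.
rewrite size_drop nth_drop ltn_subRL => ks; exists (j.+1 + k) => //.
by rewrite addSn ks andbT gtn_eqF // ltnS leq_addr.
Qed.

Hypothesis marks_propagate : forall i j, inI vs i j ->
  has_mark (vfac vs i j) -> has_mark (ufac vs (phi i j)).

Lemma row_marks_gt0 t i : has_mark (ufac vs i) -> 0 < row_marks t i.
Proof.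
elim: t i => [|t IH] i marked_i; first by rewrite row_marks0 /nmarked -has_count.
have [k lt_k marked_k] := has_mark_ufacP marked_i.
have k_in : k \in iota 0 (nsub vs i) by rewrite mem_iota add0n lt_k.
rewrite row_marksS; apply: leq_trans (leq_sumn_map _ k_in).
exact/IH/marks_propagate/marked_k/inI_nsub.
Qed.

Lemma row_marks_grow t i j : inI vs i j -> phi i j = i ->
  has_mark (flatten (take j (nth [::] vs i))) ||
  has_mark (flatten (drop j.+1 (nth [::] vs i))) ->
  (row_marks t i).+1 <= row_marks t.+1 i.
Proof.
move=> /andP[_ lt_j] loop /has_mark_outsideP[k /andP[kj lt_k] marked_k].
have pos_k : 0 < row_marks t (phi i k).
  exact/row_marks_gt0/marks_propagate/marked_k/inI_nsub.
rewrite row_marksS; apply: leq_trans (leq_sumn_map2 _ (iota_uniq _ _) _ _ kj).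
- by rewrite -addn1 loop leq_add2l.
- by rewrite mem_iota add0n lt_j.
- by rewrite mem_iota add0n lt_k.
Qed.

End RowMarks.

Theorem lemma2 (T : finType) (L : seq T -> Prop) (l : nat)
  (HL : indexed_language L) (Hl : is_threshold L l)
  (w : seq (T * bool)) (Hw : l <= nmarked w)
  (vs : seq (seq (seq (T * bool)))) (phi : nat -> nat -> nat)
  (Hf : threshold_factorization vs phi L w) :
  forall t : nat, t <= nmarked (wmarked vs phi t).
Proof.
case: Hf => _ _ propagate [i [j [Iij loop outside]]] t.
have row_i_ge : t <= row_marks vs phi t i.
  elim: t => // t IH.
  by apply: leq_trans (row_marks_grow propagate t Iij loop outside); rewrite ltnS.
rewrite nmarked_wmarked Xword_rows iter_hmorph_flatten marks_flatten -!map_comp.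
have i_in : i \in iota 0 (nfac vs) by case/andP: Iij => lt_i _; rewrite mem_iota add0n lt_i.
exact: leq_trans row_i_ge (leq_sumn_map _ i_in).
Qed.
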